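(* Let $k\ge 1$ and let $G$ be a graph with minimum degree at least $k$ and maximum degree $\Delta(G)$. Let $\Omega$ be a total $k$-coalition partition of $G$ of maximum cardinality $\mathrm{TC}_k(G)$. Then every $A\in\Omega$ forms a total $k$-coalition with at most $\Delta(G)-k+1$ sets in $\Omega$.
   Context: All graphs are finite, simple and connected. $N(v)$ denotes the open neighborhood of $v$. For a graph $G$ with $\delta(G)\ge k$, a set $S\subseteq V(G)$ is a total $k$-dominating set if $|N(v)\cap S|\ge k$ for every $v\in V(G)$. Two disjoint sets $U,W\subseteq V(G)$ form a total $k$-coalition if neither is a total $k$-dominating set but $U\cup W$ is. A total $k$-coalition partition of $G$ is a partition $\Omega$ of $V(G)$ in which every set forms a total $k$-coalition with some other set of $\Omega$; $\mathrm{TC}_k(G)$ is the maximum cardinality of such a partition. *)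

From mathcomp Require Import all_boot.
Set Implicit Arguments. Unset Strict Implicit. Unset Printing Implicit Defensive.

Definition simple_graph (T : finType) (e : rel T) : Prop :=
  irreflexive e /\ symmetric e.
Definition connected_graph (T : finType) (e : rel T) : Prop :=
  forall x y : T, connect e x y.

Definition nbhd (T : finType) (e : rel T) (v : T) : {set T} := [set u | e v u].
Definition deg (T : finType) (e : rel T) (v : T) : nat := #|nbhd e v|.
Definition min_deg_ge (T : finType) (e : rel T) (k : nat) : Prop :=
  forall v : T, k <= deg e v.
Definition max_deg (T : finType) (e : rel T) : nat := \max_(v : T) deg e v.

Definition total_kdom (T : finType) (e : rel T) (k : nat) (S : {set T}) : bool :=
  [forall v : T, k <= #|nbhd e v :&: S|].

Definition tk_coalition (T : finType) (e : rel T) (k : nat) (U W : {set T}) : bool :=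
  [&& [disjoint U & W], ~~ total_kdom e k U, ~~ total_kdom e k W
    & total_kdom e k (U :|: W)].

Definition tk_coalition_partition (T : finType) (e : rel T) (k : nat)
    (P : {set {set T}}) : Prop :=
  partition P [set: T] /\
  forall A, A \in P -> exists2 B, B \in P & tk_coalition e k A B.

(* Fix a vertex v at which A fails to be total k-dominating, say with
   a = |N(v) ∩ A| < k neighbours in A.  Every partner B of A must supply at
   least k - a further neighbours of v, and the partners are pairwise disjoint
   and disjoint from A, so m partners need m (k - a) + a <= deg v <= Δ(G);
   hence m <= Δ(G) - k + 1. *)
From mathcomp Require Import all_boot.
From mathcomp Require Import zify.

Set Implicit Arguments.
Unset Strict Implicit.
Unset Printing Implicit Defensive.

Lemma card_setI_cover (T : finType) (N : {set T}) (P : {set {set T}}) :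
  trivIset P -> #|N :&: cover P| = \sum_(B in P) #|N :&: B|.
Proof.
move=> tiP; rewrite -sum1_card.
rewrite (eq_bigl (fun x => (x \in cover P) && (x \in N))); last first.
  by move=> x; rewrite inE andbC.
rewrite big_trivIset_cond //; apply: eq_bigr => B _.
by rewrite -sum1_card; apply: eq_bigl => x; rewrite inE andbC.
Qed.

Lemma sum_card_setI_disjoint_cover (T : finType) (N A : {set T})
    (P : {set {set T}}) :
  trivIset P -> (forall B, B \in P -> [disjoint A & B]) ->
  \sum_(B in P) #|N :&: B| + #|N :&: A| <= #|N|.
Proof.
move=> tiP disjAP; rewrite -card_setI_cover // -(cardsID A N) addnC leq_add2l.
apply/subset_leq_card/subsetP => x /setIP [xN /bigcupP [B BP xB]].
by rewrite inE xN andbT; apply: contraL xB => /(disjointFr (disjAP B BP)) ->.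
Qed.

Lemma leq_deficit_count (m a k D : nat) :
  a < k -> m * (k - a) + a <= D -> m <= D - k + 1.
Proof. by nia. Qed.

Lemma total_kdom_setU_split (T : finType) (e : rel T) (k : nat)
    (U W : {set T}) (v : T) :
  total_kdom e k (U :|: W) -> k <= #|nbhd e v :&: U| + #|nbhd e v :&: W|.
Proof.
move=> /forallP /(_ v); rewrite setIUr => /leq_trans; apply.
exact: leq_card_setU.
Qed.

Lemma deg_le_max_deg (T : finType) (e : rel T) (v : T) : deg e v <= max_deg e.
Proof. exact: (@leq_bigmax _ (deg e) v). Qed.

Theorem lemma3p3 (T : finType) (e : rel T) (k : nat) (Omega : {set {set T}}) :
  simple_graph e -> connected_graph e ->
  1 <= k -> min_deg_ge e k ->
  tk_coalition_partition e k Omega ->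
  (forall P : {set {set T}}, tk_coalition_partition e k P -> #|P| <= #|Omega|) ->
  forall A, A \in Omega ->
    #|[set B in Omega | tk_coalition e k A B]| <= max_deg e - k + 1.
Proof.
move=> _ _ _ _ [partO coalO] _ A AO.
set S := [set B in Omega | tk_coalition e k A B].
have [_ _ /and4P [_ A_not_kdom _ _]] := coalO A AO.
have [v lt_a_k] : exists v, #|nbhd e v :&: A| < k.
  by move: A_not_kdom; rewrite negb_forall => /existsP [v]; rewrite -ltnNge; exists v.
have coalS B : B \in S -> tk_coalition e k A B by rewrite inE => /andP [].
have tiS : trivIset S.
  apply: trivIsetS (partition_trivIset partO).
  by apply/subsetP => B; rewrite inE => /andP [].
have disjS B : B \in S -> [disjoint A & B] by move/coalS/and4P => [].
apply: (leq_deficit_count lt_a_k); apply: leq_trans (deg_le_max_deg e v).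
apply: leq_trans (sum_card_setI_disjoint_cover (nbhd e v) tiS disjS).
rewrite leq_add2r -sum_nat_const; apply: leq_sum => B /coalS /and4P [_ _ _ kdomAB].
by rewrite leq_subLR; apply: total_kdom_setU_split.
Qed.
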